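(* For $x\in\mathbb{C}\setminus\{0,1\}$ in a small open set, consider the elliptic curve $v^2=u(u-1)(u-x)$. Let $\mathcal{A},\mathcal{B}$ be generators of its first homology, transported continuously in $x$ and avoiding the branch points and infinity. Let $\gamma=c_1\mathcal{A}+c_2\mathcal{B}$ with constants $c_1,c_2$. Set $$a_1=\oint_\gamma\frac{du}{uv},\qquad a_2=\oint_\gamma\frac{du}{(u-1)v}.$$ Then, wherever the denominator does not vanish, the function $$y(x)=\frac{x\,a_1}{x\,a_1+(x-1)\,a_2}=-\frac{x\oint_\gamma\frac{du}{uv}}{x\oint_\gamma\frac{du}{(u-x)v}+\oint_\gamma\frac{du}{(u-1)v}}$$ solves the Painlevé VI equation with parameters $(\hat\alpha,\hat\beta,\hat\gamma,\hat\delta)=(1/8,-1/8,1/8,3/8)$.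
   Context: The Painlevé VI equation with parameters $\hat\alpha,\hat\beta,\hat\gamma,\hat\delta$ is $$y''=\tfrac12\Big(\tfrac1y+\tfrac1{y-1}+\tfrac1{y-x}\Big)(y')^2-\Big(\tfrac1x+\tfrac1{x-1}+\tfrac1{y-x}\Big)y'+\frac{y(y-1)(y-x)}{x^2(x-1)^2}\Big(\hat\alpha+\hat\beta\frac{x}{y^2}+\hat\gamma\frac{x-1}{(y-1)^2}+\hat\delta\frac{x(x-1)}{(y-x)^2}\Big).$$ *)

From Stdlib Require Import Reals.
From Coquelicot Require Import Coquelicot.
Open Scope C_scope.

Definition Cint01 (f : R -> C) : C := @RInt C_R_CompleteNormedModule f 0%R 1%R.

Definition path_deriv (g : R -> C) (t : R) (l : C) : Prop :=
  @is_derive R_AbsRing C_R_NormedModule g t l.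

Definition ell_cubic (x u : C) : C := u * (u - 1) * (u - x).

(* A closed cycle on the affine curve v^2 = u(u-1)(u-x), for every parameter x in U:
   the u-projection is a fixed C^1 loop g (with derivative dg) avoiding the branch
   points 0, 1, x, and w x t is a continuous choice of v along it (the lift of the loop to the
   curve), depending continuously on (x,t), closing up: w x 0 = w x 1. *)
Record lifted_cycle (U : C -> Prop) := {
  lc_path : R -> C;
  lc_dpath : R -> C;
  lc_lift : C -> R -> C;
  lc_path_C1 : forall t : R, path_deriv lc_path t (lc_dpath t) /\ continuous lc_dpath t;
  lc_closed : lc_path 0%R = lc_path 1%R;
  lc_avoid : forall x t, U x -> (0 <= t <= 1)%R ->
      lc_path t <> 0 /\ lc_path t <> 1 /\ lc_path t <> x;
  lc_lift_sq : forall x t, U x -> (0 <= t <= 1)%R ->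
      lc_lift x t * lc_lift x t = ell_cubic x (lc_path t);
  lc_lift_cont : forall x t, U x -> (0 <= t <= 1)%R ->
      continuous (fun p : C * R => lc_lift (fst p) (snd p)) (x, t);
  lc_lift_closed : forall x, U x -> lc_lift x 0%R = lc_lift x 1%R
}.

Definition period {U : C -> Prop} (cy : lifted_cycle U) (e x : C) : C :=
  Cint01 (fun t => lc_dpath U cy t / ((lc_path U cy t - e) * lc_lift U cy x t)).

Definition PVI (al be ga de : C) (x y y1 y2 : C) : Prop :=
  y2 = / 2 * (/ y + / (y - 1) + / (y - x)) * (y1 * y1)
       - (/ x + / (x - 1) + / (y - x)) * y1
       + y * (y - 1) * (y - x) / (x * x * ((x - 1) * (x - 1)))
         * (al + be * x / (y * y) + ga * (x - 1) / ((y - 1) * (y - 1))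
            + de * x * (x - 1) / ((y - x) * (y - x))).

(* Differentiating under the integral sign and decomposing into partial fractions in u,
   the x-derivative of each period P_e = oint du/((u-e)v) is (P_x - P_e)/(2(x-e)).
   The form du/(uv) + du/((u-1)v) + du/((u-x)v) is exact, equal to d(-2/v), so
   P_0 + P_1 + P_x = 0 around a closed cycle.  Hence a1 = P_0 and a2 = P_1 (and any
   constant combination over two cycles) solve a linear Fuchsian system, and Painleve VI
   for y = x a1 / (x a1 + (x-1) a2) becomes a rational identity in x, a1, a2. *)

From Stdlib Require Import Reals Lra ClassicalEpsilon.
From Coquelicot Require Import Coquelicot.
Open Scope C_scope.

Local Notation RInt_C := (@RInt C_R_CompleteNormedModule).

Lemma C2_neq0 : RtoC 2 <> 0.
Proof. intros E. apply (f_equal fst) in E. simpl in E. lra. Qed.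

Lemma Cdouble_neq0 (a : C) : a <> 0 -> a + a <> 0.
Proof.
  intros H E. apply H. replace a with (/ 2 * (a + a)) by (field; apply C2_neq0). rewrite E. ring.
Qed.

Lemma scal_C_R (r : R) (u : C) : @scal R_Ring C_R_ModuleSpace r u = RtoC r * u.
Proof.
  destruct u as [p q]. unfold scal; simpl. unfold prod_scal, Cmult, RtoC, scal; simpl.
  unfold mult; simpl. f_equal; ring.
Qed.

Lemma norm_C_R (u : C) : @norm R_AbsRing C_R_NormedModule u = Cmod u.
Proof.
  destruct u as [p q]. unfold norm; simpl. unfold prod_norm, Cmod, norm; simpl. unfold abs; simpl.
  rewrite !Rmult_1_r, <- !Rabs_mult, !Rabs_pos_eq by nra. reflexivity.
Qed.

(* [C] carries two uniform structures: the product one ([C_UniformSpace]) and the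
   one of the absolute ring [C_AbsRing], needed by Coquelicot's lemmas on products. *)
Lemma locally_C_Cmod (c : C) (P : C -> Prop) :
  @locally C_UniformSpace c P <-> @locally (AbsRing_UniformSpace C_AbsRing) c P.
Proof.
  split; intros [e He].
  - exists e. intros y Hy. apply He, C_NormedModule_mixin_compat1, Hy.
  - assert (Hs : (0 < sqrt 2)%R) by (apply sqrt_lt_R0; lra).
    assert (Hp : (0 < e / sqrt 2)%R) by (apply Rdiv_lt_0_compat; [apply cond_pos | exact Hs]).
    exists (mkposreal _ Hp). intros y Hy. apply He.
    pose proof (C_NormedModule_mixin_compat2 c y (mkposreal _ Hp) Hy) as Hb. simpl in Hb.
    change (Cmod (minus y c) < e)%R.
    replace (pos e) with (sqrt 2 * (e / sqrt 2))%R by (field; lra).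
    exact Hb.
Qed.

Lemma continuous_C_Cmod {T : UniformSpace} (f : T -> C) (x : T) :
  @continuous T C_UniformSpace f x <-> @continuous T (AbsRing_UniformSpace C_AbsRing) f x.
Proof. split; intros H P HP; apply H, locally_C_Cmod, HP. Qed.

Lemma continuous_Cinv_at (c : C) : c <> 0 -> continuous Cinv c.
Proof.
  intros Hc. apply continuous_C_Cmod, filterlim_locally. intros eps.
  set (m := Cmod c).
  assert (Hm : (0 < m)%R) by (apply Cmod_gt_0, Hc).
  pose proof (cond_pos eps) as He.
  assert (Hd : (0 < Rmin (m / 2) (eps * m * m / 2))%R).
  { apply Rmin_pos; [lra|]. apply Rdiv_lt_0_compat; [|lra]. repeat apply Rmult_lt_0_compat; lra. }
  apply locally_C_Cmod. exists (mkposreal _ Hd). intros z Hz. change C in z.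
  change (Cmod (z - c) < Rmin (m / 2) (eps * m * m / 2))%R in Hz.
  change (Cmod (/ z - / c) < eps)%R.
  pose proof (Rmin_l (m / 2) (eps * m * m / 2)). pose proof (Rmin_r (m / 2) (eps * m * m / 2)).
  assert (Hcz : Cmod (c - z) = Cmod (z - c)).
  { replace (c - z) with (- (z - c)) by ring. apply Cmod_opp. }
  assert (Hzm : (m / 2 < Cmod z)%R).
  { assert (Ht : (m <= Cmod (c - z) + Cmod z)%R).
    { unfold m. replace c with ((c - z) + z) at 1 by ring. apply Cmod_triangle. }
    lra. }
  assert (Hz0 : z <> 0). { intros ->. rewrite Cmod_0 in Hzm. lra. }
  replace (/ z - / c) with ((c - z) * / (z * c)) by (field; split; assumption).
  rewrite Cmod_mult, Cmod_inv, Cmod_mult by (apply Cmult_neq_0; assumption).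
  fold m. rewrite Hcz.
  apply (Rmult_lt_reg_r (Cmod z * m)); [nra|].
  rewrite Rmult_assoc, Rinv_l by nra.
  assert (eps * (m / 2) * m < eps * Cmod z * m)%R
    by (apply Rmult_lt_compat_r; [lra | apply Rmult_lt_compat_l; lra]).
  nra.
Qed.

Section ComplexContinuity.

Context {T : UniformSpace}.
Implicit Types (f g : T -> C) (x : T).

Lemma continuous_Cmult f g x :
  continuous f x -> continuous g x -> continuous (fun y => f y * g y) x.
Proof.
  intros Hf%continuous_C_Cmod Hg%continuous_C_Cmod.
  exact (proj2 (continuous_C_Cmod _ _) (continuous_mult (K := C_AbsRing) f g x Hf Hg)).
Qed.

Lemma continuous_Cplus f g x :
  continuous f x -> continuous g x -> continuous (fun y => f y + g y) x.
Proof. exact (continuous_plus (V := C_NormedModule) f g x). Qed.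

Lemma continuous_Cminus f g x :
  continuous f x -> continuous g x -> continuous (fun y => f y - g y) x.
Proof.
  intros Hf Hg. apply continuous_Cplus; [exact Hf|].
  exact (continuous_opp (V := C_NormedModule) g x Hg).
Qed.

Lemma continuous_Cinv f x : continuous f x -> f x <> 0 -> continuous (fun y => / f y) x.
Proof. intros Hf Hn. apply (continuous_comp f Cinv); [exact Hf | apply continuous_Cinv_at, Hn]. Qed.

Lemma continuous_Cdiv f g x :
  continuous f x -> continuous g x -> g x <> 0 -> continuous (fun y => f y / g y) x.
Proof. intros Hf Hg Hn. apply continuous_Cmult; [exact Hf | apply continuous_Cinv; assumption]. Qed.

Lemma locally_neq0 f x : continuous f x -> f x <> 0 -> locally x (fun y => f y <> 0).
Proof.
  intros Hf%continuous_C_Cmod Hn.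
  assert (Hm : (0 < Cmod (f x))%R) by (apply Cmod_gt_0, Hn).
  generalize (proj1 (filterlim_locally _ _) Hf (mkposreal _ Hm)).
  apply filter_imp. intros y Hy E. change (Cmod (f y - f x) < Cmod (f x))%R in Hy.
  rewrite E in Hy. replace (0 - f x) with (- f x) in Hy by ring. rewrite Cmod_opp in Hy. lra.
Qed.

End ComplexContinuity.

Lemma is_derive_slope {K : AbsRing} {V : NormedModule K} (f Phi : K -> V) (x : K) :
  locally x (fun z => minus (f z) (f x) = scal (minus z x) (Phi z)) ->
  continuous Phi x -> is_derive f x (Phi x).
Proof.
  intros Heq Hc. split; [apply is_linear_scal_l|].
  intros x' Hx' eps.
  apply (is_filter_lim_locally_unique (V := AbsRing_NormedModule K)) in Hx'. subst x'.
  assert (Hp : (0 < eps / norm_factor (V := V))%R)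
    by (apply Rdiv_lt_0_compat; [apply cond_pos | apply norm_factor_gt_0]).
  generalize (filter_and _ _ Heq (proj1 (filterlim_locally _ _) Hc (mkposreal _ Hp))).
  apply filter_imp. intros z [Hz Hb%norm_compat2]. simpl in Hb.
  replace (norm_factor * (eps / norm_factor))%R with (pos eps) in Hb
    by (field; apply Rgt_not_eq, norm_factor_gt_0).
  rewrite Hz, <- (@scal_minus_distr_l (AbsRing.Ring K) (NormedModule.ModuleSpace K V)).
  eapply Rle_trans; [apply norm_scal|].
  rewrite (Rmult_comm eps). apply Rmult_le_compat_l; [apply abs_ge_0 | apply Rlt_le, Hb].
Qed.

Lemma is_derive_slope_R (f Phi : R -> C) (t : R) :
  locally t (fun s => f s - f t = RtoC (s - t) * Phi s) -> continuous Phi t ->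
  @is_derive R_AbsRing C_R_NormedModule f t (Phi t).
Proof.
  intros Heq. apply (is_derive_slope (V := C_R_NormedModule)).
  generalize Heq. apply filter_imp. intros s Hs.
  rewrite scal_C_R. exact Hs.
Qed.

Lemma is_derive_slope_C (f Phi : C -> C) (x : C) :
  locally x (fun z => f z - f x = (z - x) * Phi z) -> continuous Phi x ->
  is_derive f x (Phi x).
Proof.
  intros Heq Hc. apply (is_derive_slope (K := C_AbsRing) (V := C_NormedModule)).
  - apply locally_C_Cmod, Heq.
  - intros P HP. apply locally_C_Cmod, Hc, HP.
Qed.

Lemma slope_of_is_derive_R (f : R -> C) (t : R) (l : C) :
  @is_derive R_AbsRing C_R_NormedModule f t l ->
  exists Phi : R -> C, continuous Phi t /\ Phi t = l /\
    forall s, f s - f t = RtoC (s - t) * Phi s.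
Proof.
  intros [_ Hd].
  exists (fun s => if Req_EM_T s t then l else RtoC (/ (s - t)) * (f s - f t)).
  split; [|split].
  - apply filterlim_locally. intros eps.
    assert (He2 : (0 < eps / 2)%R) by (pose proof (cond_pos eps); lra).
    generalize (Hd t (fun P HP => HP) (mkposreal _ He2)). apply filter_imp.
    intros s Hs. simpl in Hs.
    destruct (Req_EM_T t t) as [_|]; [|congruence].
    destruct (Req_EM_T s t) as [->|Hst%Rminus_eq_contra]; [apply ball_center|].
    apply C_NormedModule_mixin_compat1.
    change (Cmod (RtoC (/ (s - t)) * (f s - f t) - l) < eps)%R.
    rewrite norm_C_R, scal_C_R in Hs.
    change (Cmod (f s - f t - RtoC (s - t) * l) <= eps / 2 * Rabs (s - t))%R in Hs.
    replace (RtoC (/ (s - t)) * (f s - f t) - l)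
      with (RtoC (/ (s - t)) * (f s - f t - RtoC (s - t) * l))
      by (rewrite RtoC_inv by exact Hst; field; intros E%(f_equal fst); exact (Hst E)).
    rewrite Cmod_mult, Cmod_R, Rabs_inv.
    assert (Ha : (0 < Rabs (s - t))%R) by (apply Rabs_pos_lt, Hst).
    apply (Rmult_lt_reg_l (Rabs (s - t))); [exact Ha|].
    rewrite <- Rmult_assoc, Rinv_r by lra. pose proof (cond_pos eps). nra.
  - destruct (Req_EM_T t t); [reflexivity | congruence].
  - intros s. destruct (Req_EM_T s t) as [->|Hst].
    + replace (t - t)%R with 0%R by ring. ring.
    + rewrite Cmult_assoc, <- RtoC_mult, Rinv_r by lra. ring.
Qed.

Lemma is_derive_C_abs (f : C -> C) (x a : C) :
  @is_derive C_AbsRing C_NormedModule f x a <->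
  @is_derive C_AbsRing (AbsRing_NormedModule C_AbsRing) f x a.
Proof. split; intros [_ Hd]; (split; [apply is_linear_scal_l | exact Hd]). Qed.

Lemma is_derive_eq_val (f : C -> C) (x a b : C) : is_derive f x a -> a = b -> is_derive f x b.
Proof. intros H <-; exact H. Qed.

Lemma is_derive_Cconst (c x : C) : is_derive (fun _ : C => c) x (RtoC 0).
Proof. exact (is_derive_const (K := C_AbsRing) (V := C_NormedModule) c x). Qed.

Lemma is_derive_Cid (x : C) : is_derive (fun z : C => z) x (RtoC 1).
Proof. apply is_derive_C_abs. exact (is_derive_id (K := C_AbsRing) x). Qed.

Lemma is_derive_Cplus (f g : C -> C) (x a b : C) :
  is_derive f x a -> is_derive g x b -> is_derive (fun z => f z + g z) x (a + b).
Proof. exact (is_derive_plus (K := C_AbsRing) (V := C_NormedModule) f g x a b). Qed.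

Lemma is_derive_Cminus (f g : C -> C) (x a b : C) :
  is_derive f x a -> is_derive g x b -> is_derive (fun z => f z - g z) x (a - b).
Proof.
  intros Hf Hg. apply is_derive_Cplus; [exact Hf|].
  exact (is_derive_opp (K := C_AbsRing) (V := C_NormedModule) g x b Hg).
Qed.

Lemma is_derive_Cmult (f g : C -> C) (x a b : C) :
  is_derive f x a -> is_derive g x b -> is_derive (fun z => f z * g z) x (a * g x + f x * b).
Proof.
  intros Hf%is_derive_C_abs Hg%is_derive_C_abs.
  exact (proj2 (is_derive_C_abs _ _ _) (is_derive_mult f g x a b Hf Hg Cmult_comm)).
Qed.

Lemma is_derive_Cinv_at (c : C) : c <> 0 -> is_derive Cinv c (- / (c * c)).
Proof.
  intros Hc. apply (is_derive_slope_C Cinv (fun z => - / (z * c))).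
  - generalize (locally_neq0 (fun z : C => z) c (continuous_id c) Hc).
    apply filter_imp. intros z Hz. field. split; assumption.
  - apply (continuous_opp (V := C_NormedModule)), continuous_Cinv.
    + apply continuous_Cmult; [apply continuous_id | apply continuous_const].
    + apply Cmult_neq_0; assumption.
Qed.

Lemma is_derive_Cdiv (f g : C -> C) (x a b : C) :
  is_derive f x a -> is_derive g x b -> g x <> 0 ->
  is_derive (fun z => f z / g z) x ((a * g x - f x * b) / (g x * g x)).
Proof.
  intros Hf Hg Hn.
  pose proof (is_derive_comp (K := C_AbsRing) (V := C_NormedModule) Cinv g x _ b
    (is_derive_Cinv_at _ Hn) (proj1 (is_derive_C_abs _ _ _) Hg)) as Hinv.
  eapply is_derive_eq_val; [exact (is_derive_Cmult _ _ x _ _ Hf Hinv)|].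
  change (a * / g x + f x * (b * - / (g x * g x)) = (a * g x - f x * b) / (g x * g x)).
  field. exact Hn.
Qed.

Lemma PVI_ratio (x A B : C) :
  x <> 0 -> x - 1 <> 0 -> A <> 0 -> B <> 0 -> A + B <> 0 -> x * A + (x - 1) * B <> 0 ->
  let D := x * A + (x - 1) * B in
  PVI (/ 8) (- / 8) (/ 8) (3 / 8) x (x * A / D)
    ((x * (A * A) - (x - 1) * (B * B)) / (2 * (D * D)))
    (((B * B - A * A) * D + (x * (A * A) - (x - 1) * (B * B)) * (A + B)) / (2 * (D * (D * D)))).
Proof.
  intros Hx Hx1 HA HB HAB HD D. unfold PVI.
  replace (x * A / D - 1) with (- ((x - 1) * B) / D) by (unfold D; field; exact HD).
  replace (x * A / D - x) with (- (x * (x - 1) * (A + B)) / D) by (unfold D; field; exact HD).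
  unfold D. field. repeat split; assumption.
Qed.

Section FuchsianSystem.

Variables (V : C -> Prop) (a1 a2 : C -> C).
Hypothesis V_open : open V.
Hypothesis V_avoid : forall z, V z -> z <> 0 /\ z <> 1.
Hypothesis a1_deriv : forall z, V z -> is_derive a1 z (- (2 * a1 z + a2 z) / (2 * z)).
Hypothesis a2_deriv : forall z, V z -> is_derive a2 z (- (a1 z + 2 * a2 z) / (2 * (z - 1))).

Local Notation D z := (z * a1 z + (z - 1) * a2 z).
Local Notation y z := (z * a1 z / D z).
Local Notation dy z := ((z * (a1 z * a1 z) - (z - 1) * (a2 z * a2 z)) / (2 * (D z * D z))).

Lemma fuchsian_denom_deriv (z : C) : V z -> is_derive (fun z => D z) z (- (a1 z + a2 z) / 2).
Proof.
  intros Vz. destruct (V_avoid z Vz) as [Hz0 Hz1%(Cminus_eq_contra _ 1)].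
  eapply is_derive_eq_val.
  - apply is_derive_Cplus; apply is_derive_Cmult.
    + apply is_derive_Cid.
    + apply a1_deriv, Vz.
    + apply is_derive_Cminus; [apply is_derive_Cid | apply is_derive_Cconst].
    + apply a2_deriv, Vz.
  - cbv beta. field. split; assumption.
Qed.

Lemma fuchsian_ratio_deriv (z : C) : V z -> D z <> 0 -> is_derive (fun z => y z) z (dy z).
Proof.
  intros Vz Dz. destruct (V_avoid z Vz) as [Hz0 Hz1%(Cminus_eq_contra _ 1)].
  eapply is_derive_eq_val.
  - apply is_derive_Cdiv; [| apply fuchsian_denom_deriv, Vz | exact Dz].
    apply is_derive_Cmult; [apply is_derive_Cid | apply a1_deriv, Vz].
  - cbv beta. field. repeat split; assumption.
Qed.

Lemma fuchsian_ratio_deriv2 (x : C) : V x -> D x <> 0 ->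
  is_derive (fun z => dy z) x
    (((a2 x * a2 x - a1 x * a1 x) * D x + (x * (a1 x * a1 x) - (x - 1) * (a2 x * a2 x))
       * (a1 x + a2 x)) / (2 * (D x * (D x * D x)))).
Proof.
  intros Vx Dx. destruct (V_avoid x Vx) as [Hx0 Hx1%(Cminus_eq_contra _ 1)].
  eapply is_derive_eq_val.
  - apply is_derive_Cdiv.
    + apply is_derive_Cminus; apply is_derive_Cmult.
      * apply is_derive_Cid.
      * apply is_derive_Cmult; apply a1_deriv, Vx.
      * apply is_derive_Cminus; [apply is_derive_Cid | apply is_derive_Cconst].
      * apply is_derive_Cmult; apply a2_deriv, Vx.
    + apply is_derive_Cmult; [apply is_derive_Cconst|].
      apply is_derive_Cmult; apply fuchsian_denom_deriv, Vx.
    + apply Cmult_neq_0; [apply C2_neq0 | apply Cmult_neq_0; exact Dx].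
  - cbv beta. field. repeat split; assumption.
Qed.

Theorem fuchsian_PVI (x : C) : V x -> D x <> 0 ->
  exists y1 y2 : C,
    is_derive (fun z => y z) x y1 /\
    (exists dy : C -> C,
       locally x (fun z => is_derive (fun z => y z) z (dy z)) /\ is_derive dy x y2) /\
    (y x <> 0 -> y x <> 1 -> y x <> x -> PVI (/ 8) (- / 8) (/ 8) (3 / 8) x (y x) y1 y2).
Proof.
  intros Vx Dx. destruct (V_avoid x Vx) as [Hx0 Hx1%(Cminus_eq_contra _ 1)].
  assert (D_cont : continuous (fun z => D z) x).
  { intros P HP. apply locally_C_Cmod.
    apply (ex_derive_continuous (K := C_AbsRing) (V := C_NormedModule)); [|exact HP].
    eexists. apply fuchsian_denom_deriv, Vx. }
  eexists; eexists; split; [|split].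
  - apply fuchsian_ratio_deriv; assumption.
  - exists (fun z => dy z). split; [|apply fuchsian_ratio_deriv2; assumption].
    generalize (filter_and _ _ (V_open x Vx) (locally_neq0 _ x D_cont Dx)).
    apply filter_imp. intros z [Vz Dz]. apply fuchsian_ratio_deriv; assumption.
  - intros Hy0 Hy1 Hyx.
    assert (HA : a1 x <> 0) by (intros E; apply Hy0; rewrite E; unfold Cdiv; ring).
    assert (HB : a2 x <> 0).
    { intros E. apply Hy1. replace (y x) with (1 + (- (x - 1) * a2 x) / D x) by (field; exact Dx).
      rewrite E. unfold Cdiv. ring. }
    assert (HAB : a1 x + a2 x <> 0).
    { intros E. apply Hyx.
      replace (y x) with (x + (- (x * (x - 1)) * (a1 x + a2 x)) / D x) by (field; exact Dx).
      rewrite E. unfold Cdiv. ring. }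
    apply PVI_ratio; assumption.
Qed.

End FuchsianSystem.

Lemma Riemann_sum_Cmult (c : C) (f : R -> C) (ptd : SF_seq) :
  @Riemann_sum C_R_ModuleSpace (fun t => c * f t) ptd = c * @Riemann_sum C_R_ModuleSpace f ptd.
Proof.
  apply SF_cons_ind with (s := ptd).
  - intros x0. unfold Riemann_sum. simpl. change (@eq C (RtoC 0) (c * RtoC 0)). ring.
  - intros h s IH. rewrite !Riemann_sum_cons, IH, !scal_C_R.
    change (RtoC (SF_h s - fst h) * (c * f (snd h)) + c * Riemann_sum f s
            = c * (RtoC (SF_h s - fst h) * f (snd h) + Riemann_sum f s)).
    ring.
Qed.

Lemma is_RInt_Cmult (c : C) (f : R -> C) (a b : R) (I : C) :
  @is_RInt C_R_NormedModule f a b I -> @is_RInt C_R_NormedModule (fun t => c * f t) a b (c * I).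
Proof.
  intros H. apply filterlim_ext with
    (f := fun ptd =>
       c * @scal R_Ring C_R_ModuleSpace (sign (b - a)) (@Riemann_sum C_R_ModuleSpace f ptd)).
  - intros ptd. rewrite Riemann_sum_Cmult, !scal_C_R. ring.
  - eapply filterlim_comp; [exact H|].
    apply (continuous_Cmult (fun _ => c) (fun u => u) I);
      [apply continuous_const | apply continuous_id].
Qed.

Lemma uniform_continuity_01 {T : UniformSpace} (Phi : T -> R -> C) (x : T) :
  (forall t, (0 <= t <= 1)%R -> continuous (fun p : T * R => Phi (fst p) (snd p)) (x, t)) ->
  forall eps : posreal,
    locally x (fun z => forall t, (0 <= t <= 1)%R -> ball (Phi x t) eps (Phi z t)).
Proof.
  intros Hc eps.
  assert (He2 : (0 < eps / 2)%R) by (pose proof (cond_pos eps); lra).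
  assert (Hd : forall t, exists d : posreal, (0 <= t <= 1)%R ->
     forall z s, ball x d z -> ball t d s -> ball (Phi x t) (eps / 2) (Phi z s)).
  { intros t. destruct (Rle_dec 0 t) as [H0|H0]; [destruct (Rle_dec t 1) as [H1|H1]|].
    - destruct (Hc t (conj H0 H1) (ball (Phi x t) (mkposreal _ He2)) (locally_ball _ _)) as [d Hd].
      exists d. intros _ z s Hz Hs. apply (Hd (z, s)). split; assumption.
    - exists (mkposreal 1 Rlt_0_1). intros [_ H]; lra.
    - exists (mkposreal 1 Rlt_0_1). intros [H _]; lra. }
  destruct (choice _ Hd) as [delta Hdelta].
  destruct (compactness_value_1d 0 1 delta) as [d Hcomp].
  exists d. intros z Hz t Ht.
  apply NNPP. intros Hnot. apply (Hcomp t Ht). intros [t0 [Ht0 [Hdist Hle]]]. apply Hnot.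
  assert (Hb : ball t0 (delta t0) t) by exact Hdist.
  replace (pos eps) with (eps / 2 + eps / 2)%R by field.
  apply ball_triangle with (Phi x t0).
  - apply ball_sym, (Hdelta t0 Ht0); [apply ball_center | exact Hb].
  - apply (Hdelta t0 Ht0); [apply (ball_le x d); assumption | exact Hb].
Qed.

Lemma continuous_eq_on_interval {V : NormedModule R_AbsRing} (E : R -> V) (a b p : R) (c : V) :
  (a < b)%R -> (a <= p <= b)%R -> continuous E p ->
  (forall s, (a < s < b)%R -> E s = c) -> E p = c.
Proof.
  intros Hab Hp Hc HE. apply eq_close. intros eps.
  destruct (proj1 (filterlim_locally _ _) Hc eps) as [d Hd].
  pose proof (cond_pos d) as Hd0.
  set (l := Rmin (1 / 2) (d / (2 * (b - a)))).
  assert (Hl : (0 < l <= 1 / 2)%R)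
    by (split; [apply Rmin_pos; [lra | apply Rdiv_lt_0_compat; lra] | apply Rmin_l]).
  assert (Hld : (l * (b - a) < d)%R).
  { apply (Rle_lt_trans _ (d / (2 * (b - a)) * (b - a))).
    - apply Rmult_le_compat_r; [lra | apply Rmin_r].
    - apply (Rmult_lt_reg_r 2); [lra|]. field_simplify; lra. }
  set (s := ((1 - l) * p + l * ((a + b) / 2))%R).
  rewrite <- (HE s) by (unfold s; nra).
  apply Hd. change (Rabs (s - p) < d)%R.
  replace (s - p)%R with (l * ((a + b) / 2 - p))%R by (unfold s; ring).
  rewrite Rabs_mult, Rabs_pos_eq by lra.
  apply (Rle_lt_trans _ (l * (b - a))); [|exact Hld].
  apply Rmult_le_compat_l; [lra|]. apply Rabs_le. lra.
Qed.

Lemma is_RInt_derive_interior_R (F f : R -> C) (a b : R) : (a < b)%R ->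
  (forall t, (a < t < b)%R -> @is_derive R_AbsRing C_R_NormedModule F t (f t)) ->
  (forall t, continuous f t) -> (forall t, continuous F t) ->
  @is_RInt C_R_NormedModule f a b (F b - F a).
Proof.
  intros Hab HF Hf HFc.
  assert (f_int : forall u v, @is_RInt C_R_NormedModule f u v (RInt_C f u v))
    by (intros u v; apply (RInt_correct (V := C_R_CompleteNormedModule)), ex_RInt_continuous;
        intros z _; apply Hf).
  set (E := fun s => RInt_C f a s - F s).
  assert (E_cont : forall s, continuous E s).
  { intros s. apply continuous_Cminus; [|apply HFc].
    apply (ex_derive_continuous (K := R_AbsRing) (V := C_R_NormedModule)). eexists.
    apply (is_derive_RInt (V := C_R_NormedModule) f _ a s);
      [apply filter_forall; intros; apply f_int | apply Hf]. }
  set (m := ((a + b) / 2)%R).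
  assert (E_mid : forall s, (a < s < b)%R -> E s = E m).
  { intros s Hs.
    assert (Hsm : @is_RInt C_R_NormedModule f s m (F m - F s)).
    { apply (is_RInt_derive (V := C_R_CompleteNormedModule) F f); intros t [H1 H2]; [|apply Hf].
      apply HF. split.
      - eapply Rlt_le_trans; [|exact H1]. apply Rmin_glb_lt; unfold m; lra.
      - eapply Rle_lt_trans; [exact H2|]. apply Rmax_lub_lt; unfold m; lra. }
    unfold E. rewrite (is_RInt_unique (V := C_R_CompleteNormedModule) _ _ _ _
      (is_RInt_Chasles f a s m _ _ (f_int a s) Hsm)).
    change (RInt_C f a s - F s = RInt_C f a s + (F m - F s) - F m). ring. }
  assert (Ea : E a = E m)
    by (apply (continuous_eq_on_interval E a b); [lra | lra | apply E_cont | exact E_mid]).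
  assert (Eb : E b = E m)
    by (apply (continuous_eq_on_interval E a b); [lra | lra | apply E_cont | exact E_mid]).
  rewrite <- Ea in Eb. unfold E in Eb. rewrite RInt_point in Eb.
  change (RInt_C f a b - F b = 0 - F a) in Eb.
  assert (HI : @eq C (RInt_C f a b) (F b - F a)).
  { replace (RInt_C f a b) with ((RInt_C f a b - F b) + F b) by ring. rewrite Eb. ring. }
  rewrite <- HI. apply f_int.
Qed.

(* Only differentiable in the open interval: extend [f] and [F] continuously to [R]. *)
Lemma is_RInt_derive_interior (F f : R -> C) (a b : R) : (a < b)%R ->
  (forall t, (a < t < b)%R -> @is_derive R_AbsRing C_R_NormedModule F t (f t)) ->
  (forall t, (a <= t <= b)%R -> continuous f t) ->
  (forall t, (a <= t <= b)%R -> continuous F t) ->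
  @is_RInt C_R_NormedModule f a b (F b - F a).
Proof.
  intros Hab HF Hf HFc.
  set (fe := @extension_C0 C_R_NormedModule f a b).
  set (Fe := @extension_C0 C_R_NormedModule F a b).
  assert (fe_eq : forall t, (a <= t <= b)%R -> fe t = f t)
    by (intros t Ht; apply extension_C0_ext; simpl; lra).
  assert (Fe_eq : forall t, (a <= t <= b)%R -> Fe t = F t)
    by (intros t Ht; apply extension_C0_ext; simpl; lra).
  apply (is_RInt_ext fe); [intros t Ht; apply fe_eq; rewrite Rmin_left, Rmax_right in Ht; lra|].
  rewrite <- (Fe_eq a), <- (Fe_eq b) by lra.
  apply (is_RInt_derive_interior_R Fe fe); [exact Hab | | |].
  - intros t Ht. rewrite fe_eq by lra.
    apply (is_derive_ext_loc F); [|apply HF, Ht].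
    generalize (open_and _ _ (open_gt a) (open_lt b) t Ht).
    apply filter_imp. intros s Hs. symmetry. apply Fe_eq. simpl in Hs. lra.
  - apply (extension_C0_continuous (V := C_R_NormedModule));
      [simpl; lra | intros t Ha Hb; apply Hf; simpl in *; lra].
  - apply (extension_C0_continuous (V := C_R_NormedModule));
      [simpl; lra | intros t Ha Hb; apply HFc; simpl in *; lra].
Qed.

Definition cubic_slope (x a b : C) : C := a * a + a * b + b * b - (1 + x) * (a + b) + x.

Lemma ell_cubic_sub (x a b : C) : ell_cubic x a - ell_cubic x b = (a - b) * cubic_slope x a b.
Proof. unfold ell_cubic, cubic_slope. ring. Qed.

Section LiftedCycle.

Variables (U : C -> Prop) (cy : lifted_cycle U).
Local Notation g := (lc_path U cy).
Local Notation g' := (lc_dpath U cy).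
Local Notation w := (lc_lift U cy).

Lemma lc_path_continuous (t : R) : continuous g t.
Proof.
  apply (ex_derive_continuous (K := R_AbsRing) (V := C_R_NormedModule)).
  eexists. apply (lc_path_C1 U cy t).
Qed.

Lemma lc_lift_continuous (x : C) (t : R) : U x -> (0 <= t <= 1)%R -> continuous (w x) t.
Proof.
  intros Ux Ht.
  apply (continuous_comp_2 (fun _ : R => x) (fun s : R => s) w).
  - apply continuous_const.
  - apply continuous_id.
  - apply (lc_lift_cont U cy x t Ux Ht).
Qed.

Lemma lc_path_sub_neq0 (e x : C) (t : R) : U x -> (0 <= t <= 1)%R ->
  e = 0 \/ e = 1 \/ e = x -> g t - e <> 0.
Proof.
  intros Ux Ht He. apply Cminus_eq_contra.
  destruct (lc_avoid U cy x t Ux Ht) as [H0 [H1 Hx]].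
  destruct He as [-> | [-> | ->]]; assumption.
Qed.

Lemma lc_lift_neq0 (x : C) (t : R) : U x -> (0 <= t <= 1)%R -> w x t <> 0.
Proof.
  intros Ux Ht E.
  destruct (lc_avoid U cy x t Ux Ht) as [H0 [H1 Hx]].
  assert (Hcubic : ell_cubic x (g t) <> 0).
  { unfold ell_cubic.
    repeat apply Cmult_neq_0; [exact H0 | apply Cminus_eq_contra ..]; assumption. }
  apply Hcubic. rewrite <- (lc_lift_sq U cy x t Ux Ht), E. ring.
Qed.

Definition period_integrand (e z : C) (t : R) : C := g' t / ((g t - e) * w z t).

(* The difference quotient [(period_integrand e z t - period_integrand e x t) / (z - x)]
   in a form that stays continuous at [z = x]. *)
Definition integrand_slope (e x z : C) (t : R) : C :=
  g' t * (g t * (g t - 1)) / ((g t - e) * w z t * w x t * (w x t + w z t)).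

Lemma continuous_period_integrand (e z : C) (t : R) : U z -> (0 <= t <= 1)%R ->
  g t - e <> 0 -> continuous (period_integrand e z) t.
Proof.
  intros Uz Ht He. apply continuous_Cdiv.
  - apply (lc_path_C1 U cy t).
  - apply continuous_Cmult; [|apply lc_lift_continuous; assumption].
    apply continuous_Cminus; [apply lc_path_continuous | apply continuous_const].
  - apply Cmult_neq_0; [exact He | apply lc_lift_neq0; assumption].
Qed.

Lemma is_RInt_period (e z : C) : U z -> (forall t, (0 <= t <= 1)%R -> g t - e <> 0) ->
  @is_RInt C_R_NormedModule (period_integrand e z) 0 1 (period cy e z).
Proof.
  intros Uz He. apply (RInt_correct (V := C_R_CompleteNormedModule)), ex_RInt_continuous.
  rewrite Rmin_left, Rmax_right by lra. intros t Ht.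
  apply continuous_period_integrand; auto.
Qed.

Lemma continuous_integrand_slope (e x : C) (t : R) : U x -> (0 <= t <= 1)%R -> g t - e <> 0 ->
  continuous (fun p : C * R => integrand_slope e x (fst p) (snd p)) (x, t).
Proof.
  intros Ux Ht He.
  assert (Cs : forall h : R -> C, continuous h t -> continuous (fun p : C * R => h (snd p)) (x, t))
    by (intros h Hh; apply (continuous_comp snd h); [apply continuous_snd | exact Hh]).
  assert (Cg : continuous (fun p : C * R => g (snd p)) (x, t)) by apply Cs, lc_path_continuous.
  assert (Cw : continuous (fun p : C * R => w (fst p) (snd p)) (x, t))
    by apply (lc_lift_cont U cy x t Ux Ht).
  assert (Cwx : continuous (fun p : C * R => w x (snd p)) (x, t))
    by (apply Cs, lc_lift_continuous; assumption).
  pose proof (lc_lift_neq0 x t Ux Ht) as Hw.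
  apply continuous_Cdiv.
  - apply continuous_Cmult; [apply Cs, (lc_path_C1 U cy t)|].
    apply continuous_Cmult; [exact Cg|].
    apply continuous_Cminus; [exact Cg | apply continuous_const].
  - apply continuous_Cmult; [apply continuous_Cmult; [apply continuous_Cmult|] |].
    + apply continuous_Cminus; [exact Cg | apply continuous_const].
    + exact Cw.
    + exact Cwx.
    + apply continuous_Cplus; [exact Cwx | exact Cw].
  - simpl. repeat apply Cmult_neq_0; try assumption. apply Cdouble_neq0, Hw.
Qed.

Lemma period_integrand_sub (e x z : C) (t : R) : U x -> U z -> (0 <= t <= 1)%R -> g t - e <> 0 ->
  period_integrand e z t - period_integrand e x t = (z - x) * integrand_slope e x z t.
Proof.
  intros Ux Uz Ht He. unfold period_integrand, integrand_slope.
  destruct (Ceq_dec z x) as [->|Hzx]; [ring|].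
  pose proof (lc_lift_neq0 x t Ux Ht) as Hwx. pose proof (lc_lift_neq0 z t Uz Ht) as Hwz.
  pose proof (lc_lift_sq U cy x t Ux Ht) as Sx. pose proof (lc_lift_sq U cy z t Uz Ht) as Sz.
  unfold ell_cubic in Sx, Sz.
  assert (H0 : g t <> 0) by apply (lc_avoid U cy x t Ux Ht).
  assert (H1 : g t - 1 <> 0) by (apply Cminus_eq_contra, (lc_avoid U cy x t Ux Ht)).
  assert (Hsq : w x t * w x t - w z t * w z t = g t * (g t - 1) * (z - x))
    by (rewrite Sx, Sz; ring).
  assert (Hsum : w x t + w z t <> 0).
  { intros E. apply (Cmult_neq_0 _ _ (Cmult_neq_0 _ _ H0 H1) (Cminus_eq_contra _ _ Hzx)).
    rewrite <- Hsq. replace (w z t) with (- w x t) by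
      (replace (w z t) with ((w x t + w z t) - w x t) by ring; rewrite E; ring). ring. }
  replace (g t * (g t - 1)) with ((w x t * w x t - w z t * w z t) / (z - x))
    by (rewrite Hsq; field; apply Cminus_eq_contra, Hzx).
  field. repeat split; try assumption. apply Cminus_eq_contra, Hzx.
Qed.

Lemma is_RInt_integrand_slope (e x : C) : U x -> (forall t, (0 <= t <= 1)%R -> g t - e <> 0) ->
  @is_RInt C_R_NormedModule (integrand_slope e x x) 0 1 (Cint01 (integrand_slope e x x)).
Proof.
  intros Ux He. apply (RInt_correct (V := C_R_CompleteNormedModule)), ex_RInt_continuous.
  rewrite Rmin_left, Rmax_right by lra. intros t Ht.
  apply (continuous_comp_2 (fun _ : R => x) (fun s : R => s) (integrand_slope e x));
    [apply continuous_const | apply continuous_id | apply continuous_integrand_slope; auto].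
Qed.

Lemma period_sub_bound (e x z : C) (eps : R) : U x -> U z ->
  (forall t, (0 <= t <= 1)%R -> g t - e <> 0) ->
  (forall t, (0 <= t <= 1)%R ->
     Cmod (integrand_slope e x z t - integrand_slope e x x t) <= eps)%R ->
  (Cmod (period cy e z - period cy e x - (z - x) * Cint01 (integrand_slope e x x))
    <= Cmod (z - x) * eps)%R.
Proof.
  intros Ux Uz He Hb.
  pose proof (is_RInt_minus _ _ _ _ _ _
    (is_RInt_minus _ _ _ _ _ _ (is_RInt_period e z Uz He) (is_RInt_period e x Ux He))
    (is_RInt_Cmult (z - x) _ _ _ _ (is_RInt_integrand_slope e x Ux He))) as HI.
  assert (Hbound : forall t, (0 <= t <= 1)%R ->
    (@norm R_AbsRing C_R_NormedModule
      (minus (minus (period_integrand e z t) (period_integrand e x t))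
             ((z - x)%C * integrand_slope e x x t)%C) <= Cmod (z - x)%C * eps)%R).
  { intros t Ht. rewrite norm_C_R.
    change (Cmod (period_integrand e z t - period_integrand e x t
                  - (z - x) * integrand_slope e x x t) <= Cmod (z - x) * eps)%R.
    rewrite (period_integrand_sub e x z t Ux Uz Ht (He t Ht)).
    replace ((z - x) * integrand_slope e x z t - (z - x) * integrand_slope e x x t)
      with ((z - x) * (integrand_slope e x z t - integrand_slope e x x t)) by ring.
    rewrite Cmod_mult. apply Rmult_le_compat_l; [apply Cmod_ge_0 | apply Hb, Ht]. }
  pose proof (norm_RInt_le_const _ 0 1 _ _ Rle_0_1 Hbound HI) as Hn.
  rewrite norm_C_R, Rminus_0_r, Rmult_1_l in Hn. exact Hn.
Qed.

Lemma is_derive_period_slope (e x : C) : open U -> U x ->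
  (forall t, (0 <= t <= 1)%R -> g t - e <> 0) ->
  is_derive (period cy e) x (Cint01 (integrand_slope e x x)).
Proof.
  intros HUo Ux He. split; [apply is_linear_scal_l|].
  intros x' Hx' eps.
  apply (is_filter_lim_locally_unique (V := AbsRing_NormedModule C_AbsRing)) in Hx'. subst x'.
  apply locally_C_Cmod.
  assert (Hs : (0 < sqrt 2)%R) by (apply sqrt_lt_R0; lra).
  assert (Hp : (0 < eps / sqrt 2)%R) by (apply Rdiv_lt_0_compat; [apply cond_pos | exact Hs]).
  generalize (filter_and _ _ (HUo x Ux) (uniform_continuity_01 (integrand_slope e x) x
    (fun t Ht => continuous_integrand_slope e x t Ux Ht (He t Ht)) (mkposreal _ Hp))).
  apply filter_imp. intros z [Uz Hb].
  change (Cmod (period cy e z - period cy e x - (z - x) * Cint01 (integrand_slope e x x))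
          <= eps * Cmod (z - x))%R.
  rewrite Rmult_comm. apply period_sub_bound; [exact Ux | exact Uz | exact He |].
  intros t Ht.
  pose proof (C_NormedModule_mixin_compat2 _ _ _ (Hb t Ht)) as Hlt. simpl in Hlt.
  replace (sqrt 2 * (eps / sqrt 2))%R with (pos eps) in Hlt by (field; lra).
  apply Rlt_le, Hlt.
Qed.

Lemma integrand_slope_diag (e x : C) (t : R) : U x -> (0 <= t <= 1)%R -> x - e <> 0 ->
  g t - e <> 0 ->
  integrand_slope e x x t = / (2 * (x - e)) * (period_integrand x x t - period_integrand e x t).
Proof.
  intros Ux Ht Hxe He. unfold integrand_slope, period_integrand.
  pose proof (lc_lift_neq0 x t Ux Ht) as Hw.
  pose proof (lc_path_sub_neq0 x x t Ux Ht (or_intror (or_intror eq_refl))) as Hx.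
  replace ((g t - e) * w x t * w x t * (w x t + w x t))
    with ((g t - e) * (w x t * w x t) * (w x t + w x t)) by ring.
  rewrite (lc_lift_sq U cy x t Ux Ht). unfold ell_cubic.
  destruct (lc_avoid U cy x t Ux Ht) as [H0 [H1%Cminus_eq_contra _]].
  field. repeat split; try assumption; try apply C2_neq0; apply Cdouble_neq0, Hw.
Qed.

Lemma is_derive_period (e x : C) : open U -> U x -> x - e <> 0 ->
  (forall t, (0 <= t <= 1)%R -> g t - e <> 0) ->
  is_derive (period cy e) x (/ (2 * (x - e)) * (period cy x x - period cy e x)).
Proof.
  intros HUo Ux Hxe He.
  eapply is_derive_eq_val; [apply is_derive_period_slope; assumption|].
  assert (Hx : forall t, (0 <= t <= 1)%R -> g t - x <> 0)
    by (intros t Ht; apply (lc_path_sub_neq0 x x t Ux Ht); auto).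
  apply (is_RInt_unique (V := C_R_CompleteNormedModule)).
  eapply is_RInt_ext; [| exact (is_RInt_Cmult _ _ _ _ _
    (is_RInt_minus _ _ _ _ _ _ (is_RInt_period x x Ux Hx) (is_RInt_period e x Ux He)))].
  rewrite Rmin_left, Rmax_right by lra. intros t Ht.
  assert (Ht' : (0 <= t <= 1)%R) by lra.
  symmetry. apply integrand_slope_diag; [exact Ux | exact Ht' | exact Hxe | exact (He t Ht')].
Qed.

(* [v] is only known to be continuous in [t]; its difference quotient is obtained from
   [v_s^2 - v_t^2 = (g s - g t) * cubic_slope x (g s) (g t)] divided by [v_s + v_t]. *)
Definition lift_inv_slope (x : C) (t s : R) : C :=
  2 * cubic_slope x (g s) (g t) / ((w x s + w x t) * w x s * w x t).

Lemma lift_inv_sub (x : C) (t s : R) : U x -> (0 <= t <= 1)%R -> (0 <= s <= 1)%R ->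
  w x s + w x t <> 0 ->
  - (2 / w x s) - - (2 / w x t) = (g s - g t) * lift_inv_slope x t s.
Proof.
  intros Ux Ht Hs Hsum.
  pose proof (lc_lift_neq0 x t Ux Ht) as Hwt. pose proof (lc_lift_neq0 x s Ux Hs) as Hws.
  assert (HQ : (g s - g t) * cubic_slope x (g s) (g t) = w x s * w x s - w x t * w x t)
    by (rewrite (lc_lift_sq U cy x s Ux Hs), (lc_lift_sq U cy x t Ux Ht); symmetry;
        apply ell_cubic_sub).
  unfold lift_inv_slope.
  replace ((g s - g t) * (2 * cubic_slope x (g s) (g t) / ((w x s + w x t) * w x s * w x t)))
    with (2 * ((g s - g t) * cubic_slope x (g s) (g t)) / ((w x s + w x t) * w x s * w x t))
    by (field; repeat split; assumption).
  rewrite HQ. field. repeat split; assumption.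
Qed.

Lemma lift_inv_slope_diag (x : C) (t : R) : U x -> (0 <= t <= 1)%R ->
  g' t * lift_inv_slope x t t
  = period_integrand 0 x t + period_integrand 1 x t + period_integrand x x t.
Proof.
  intros Ux Ht. unfold lift_inv_slope, period_integrand, cubic_slope.
  pose proof (lc_lift_neq0 x t Ux Ht) as Hw.
  destruct (lc_avoid U cy x t Ux Ht) as [H0 [H1%Cminus_eq_contra Hx%Cminus_eq_contra]].
  replace ((w x t + w x t) * w x t * w x t) with ((w x t * w x t) * (w x t + w x t)) by ring.
  rewrite (lc_lift_sq U cy x t Ux Ht). unfold ell_cubic. replace (g t - 0) with (g t) by ring.
  field. repeat split; try assumption. apply Cdouble_neq0, Hw.
Qed.

Lemma continuous_lift_inv_slope (x : C) (t : R) : U x -> (0 <= t <= 1)%R ->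
  continuous (lift_inv_slope x t) t.
Proof.
  intros Ux Ht. unfold lift_inv_slope, cubic_slope.
  pose proof (lc_path_continuous t) as Hg.
  pose proof (lc_lift_continuous x t Ux Ht) as Hw.
  pose proof (lc_lift_neq0 x t Ux Ht) as Hw0.
  apply continuous_Cdiv.
  - apply continuous_Cmult; [apply continuous_const|].
    apply continuous_Cplus; [|apply continuous_const].
    apply continuous_Cminus.
    + apply continuous_Cplus; [apply continuous_Cplus | apply continuous_const].
      * apply continuous_Cmult; exact Hg.
      * apply continuous_Cmult; [exact Hg | apply continuous_const].
    + apply continuous_Cmult; [apply continuous_const|].
      apply continuous_Cplus; [exact Hg | apply continuous_const].
  - apply continuous_Cmult; [apply continuous_Cmult | apply continuous_const]; [|exact Hw].
    apply continuous_Cplus; [exact Hw | apply continuous_const].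
  - repeat apply Cmult_neq_0; try assumption. apply Cdouble_neq0, Hw0.
Qed.

Lemma is_derive_lift_inv (x : C) (t : R) : U x -> (0 < t < 1)%R ->
  @is_derive R_AbsRing C_R_NormedModule (fun s => - (2 / w x s)) t
    (period_integrand 0 x t + period_integrand 1 x t + period_integrand x x t).
Proof.
  intros Ux Ht. assert (Ht' : (0 <= t <= 1)%R) by lra.
  destruct (slope_of_is_derive_R g t (g' t) (proj1 (lc_path_C1 U cy t)))
    as [G [G_cont [G_t G_eq]]].
  rewrite <- (lift_inv_slope_diag x t Ux Ht'), <- G_t.
  apply (is_derive_slope_R _ (fun s => G s * lift_inv_slope x t s)).
  - assert (Hsum_cont : continuous (fun s => w x s + w x t) t)
      by (apply continuous_Cplus; [apply lc_lift_continuous; assumption | apply continuous_const]).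
    pose proof (Cdouble_neq0 _ (lc_lift_neq0 x t Ux Ht')) as Hsum.
    generalize (filter_and _ _ (open_and _ _ (open_gt 0) (open_lt 1) t Ht)
      (locally_neq0 _ t Hsum_cont Hsum)).
    apply filter_imp. intros s [Hs Hsn]. simpl in Hs.
    rewrite lift_inv_sub, G_eq by (assumption || lra). ring.
  - apply continuous_Cmult; [exact G_cont | apply continuous_lift_inv_slope; assumption].
Qed.

Lemma periods_sum (x : C) : U x -> period cy 0 x + period cy 1 x + period cy x x = 0.
Proof.
  intros Ux.
  assert (Hav : forall e : C, e = 0 \/ e = 1 \/ e = x -> forall t, (0 <= t <= 1)%R -> g t - e <> 0)
    by (intros e He t Ht; apply (lc_path_sub_neq0 e x t Ux Ht He)).
  assert (Hint : @is_RInt C_R_NormedModule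
    (fun t => period_integrand 0 x t + period_integrand 1 x t + period_integrand x x t) 0 1
    (period cy 0 x + period cy 1 x + period cy x x)).
  { apply (is_RInt_plus (fun t => _ + _) (period_integrand x x));
      [apply (is_RInt_plus (period_integrand 0 x) (period_integrand 1 x)) |];
      apply is_RInt_period; auto. }
  assert (Hftc : @is_RInt C_R_NormedModule
    (fun t => period_integrand 0 x t + period_integrand 1 x t + period_integrand x x t) 0 1
    (- (2 / w x 1) - - (2 / w x 0))).
  { apply (is_RInt_derive_interior (fun s => - (2 / w x s)));
      [lra | intros t Ht; apply is_derive_lift_inv; assumption | |];
      intros t Ht.
    - apply continuous_Cplus; [apply continuous_Cplus|];
        (apply continuous_period_integrand; [exact Ux | exact Ht | apply Hav; auto]).
    - apply (continuous_opp (V := C_NormedModule)), continuous_Cdiv;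
        [apply continuous_const | apply lc_lift_continuous | apply lc_lift_neq0]; assumption. }
  rewrite <- (is_RInt_unique (V := C_R_CompleteNormedModule) _ _ _ _ Hint),
    (is_RInt_unique (V := C_R_CompleteNormedModule) _ _ _ _ Hftc), (lc_lift_closed U cy x Ux).
  ring.
Qed.

Lemma period_at_x (x : C) : U x -> period cy x x = - (period cy 0 x + period cy 1 x).
Proof.
  intros Ux. pose proof (periods_sum x Ux) as Hs.
  replace (period cy x x) with (period cy 0 x + period cy 1 x + period cy x x
    - (period cy 0 x + period cy 1 x)) by ring.
  rewrite Hs. ring.
Qed.

Lemma is_derive_period0 (x : C) : open U -> U x -> x <> 0 ->
  is_derive (period cy 0) x (- (2 * period cy 0 x + period cy 1 x) / (2 * x)).
Proof.
  intros HUo Ux Hx.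
  assert (Hx0 : x - 0 <> 0) by (apply Cminus_eq_contra, Hx).
  eapply is_derive_eq_val.
  - apply is_derive_period; [exact HUo | exact Ux | exact Hx0 |].
    intros t Ht. apply (lc_path_sub_neq0 0 x t Ux Ht). auto.
  - rewrite (period_at_x x Ux).
    field. exact Hx.
Qed.

Lemma is_derive_period1 (x : C) : open U -> U x -> x <> 1 ->
  is_derive (period cy 1) x (- (period cy 0 x + 2 * period cy 1 x) / (2 * (x - 1))).
Proof.
  intros HUo Ux Hx%Cminus_eq_contra.
  eapply is_derive_eq_val.
  - apply is_derive_period; [exact HUo | exact Ux | exact Hx |].
    intros t Ht. apply (lc_path_sub_neq0 1 x t Ux Ht). auto.
  - rewrite (period_at_x x Ux).
    field. exact Hx.
Qed.

End LiftedCycle.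

Theorem mainTheorem5
  (U : C -> Prop) (HUopen : open U) (HU01 : forall x, U x -> x <> 0 /\ x <> 1)
  (A B : lifted_cycle U) (c1 c2 : C) :
  let a1 := fun x => c1 * period A 0 x + c2 * period B 0 x in
  let a2 := fun x => c1 * period A 1 x + c2 * period B 1 x in
  let y := fun x => x * a1 x / (x * a1 x + (x - 1) * a2 x) in
  forall x : C, U x -> x * a1 x + (x - 1) * a2 x <> 0 ->
    exists y1 y2 : C,
      is_derive y x y1 /\
      (exists dy : C -> C,
         locally x (fun z => is_derive y z (dy z)) /\
         is_derive dy x y2) /\
      (y x <> 0 -> y x <> 1 -> y x <> x ->
         PVI (/ 8) (- / 8) (/ 8) (3 / 8) x (y x) y1 y2).
Proof.
  intros a1 a2 y.
  apply (fuchsian_PVI U a1 a2 HUopen HU01).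
  - intros z Uz. destruct (HU01 z Uz) as [Hz0 _].
    eapply is_derive_eq_val.
    + apply is_derive_Cplus; (apply is_derive_Cmult; [apply is_derive_Cconst|]);
        apply is_derive_period0; assumption.
    + unfold a1, a2. field. exact Hz0.
  - intros z Uz. destruct (HU01 z Uz) as [_ Hz1].
    eapply is_derive_eq_val.
    + apply is_derive_Cplus; (apply is_derive_Cmult; [apply is_derive_Cconst|]);
        apply is_derive_period1; assumption.
    + unfold a1, a2. field. apply Cminus_eq_contra, Hz1.
Qed.
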